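(* Let $(F,\|\cdot\|_F)$ be a finite-dimensional normed space over $K$ and $t>0$, and set $E=(K,|\cdot|_t)\oplus(F,\|\cdot\|_F)$. Then $E$ satisfies (SE) if and only if $F$ satisfies (SE).
   Context: $K$ is a complete non-archimedean non-trivially valued field which is not spherically complete. $(K,|\cdot|_t)$ is $K$ with norm $t|x|$; $\oplus$ denotes the direct sum with norm $\|(a,u)\|=\max(t|a|,\|u\|_F)$. A normed space $E$ satisfies (SE) if for each subspace $D\subseteq E$ and each $f\in D'$ with $\|f\|=1$ there is an extension $\tilde f\in E'$ of $f$ with $\|\tilde f\|=1$ (operator norms). *)

From HB Require Import structures.
From mathcomp Require Import all_boot all_order all_algebra.
From mathcomp Require Import all_classical all_reals.
Set Implicit Arguments. Unset Strict Implicit. Unset Printing Implicit Defensive.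
Import Order.TTheory GRing.Theory Num.Theory.
Local Open Scope ring_scope.
Local Open Scope classical_set_scope.

Section Defs.
Variables (R : realType) (K : fieldType) (abs : K -> R).

Definition nonarch_abs : Prop :=
  [/\ forall x, 0 <= abs x,
      forall x, abs x = 0 <-> x = 0,
      forall x y, abs (x * y) = abs x * abs y,
      forall x y, abs (x + y) <= Num.max (abs x) (abs y)
    & exists x, abs x != 0 /\ abs x != 1].

Definition abs_cauchy (u : nat -> K) : Prop :=
  forall e : R, 0 < e -> exists N : nat, forall m n : nat,
    (N <= m)%N -> (N <= n)%N -> abs (u m - u n) < e.

Definition abs_converges (u : nat -> K) (l : K) : Prop :=
  forall e : R, 0 < e -> exists N : nat, forall n : nat,
    (N <= n)%N -> abs (u n - l) < e.

Definition abs_complete : Prop :=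
  forall u : nat -> K, abs_cauchy u -> exists l, abs_converges u l.

Definition cball (a : K) (r : R) : set K := [set x | abs (x - a) <= r].

Definition spherically_complete : Prop :=
  forall (a : nat -> K) (r : nat -> R),
    (forall n, 0 < r n) ->
    (forall n, cball (a n.+1) (r n.+1) `<=` cball (a n) (r n)) ->
    exists x, forall n, cball (a n) (r n) x.

Variable (V : lmodType K).

Definition nanorm (N : V -> R) : Prop :=
  [/\ forall x, N x = 0 <-> x = 0,
      forall (a : K) x, N (a *: x) = abs a * N x
    & forall x y, N (x + y) <= Num.max (N x) (N y)].

Definition findim : Prop :=
  exists s : seq V, forall x : V,
    exists c : 'I_(size s) -> K, x = \sum_(i < size s) c i *: s`_i.

Definition subspace (D : set V) : Prop :=
  D 0 /\ forall (a : K) x y, D x -> D y -> D (a *: x + y).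

Definition linear_on (D : set V) (f : V -> K) : Prop :=
  forall (a : K) x y, D x -> D y -> f (a *: x + y) = a * f x + f y.

(* continuity of a linear functional = boundedness *)
Definition bounded_on (N : V -> R) (D : set V) (f : V -> K) : Prop :=
  exists C : R, forall x, D x -> abs (f x) <= C * N x.

Definition opnorm (N : V -> R) (D : set V) (f : V -> K) : R :=
  sup [set r : R | exists x, [/\ D x, x != 0 & r = abs (f x) / N x]].

Definition in_dual (N : V -> R) (D : set V) (f : V -> K) : Prop :=
  linear_on D f /\ bounded_on N D f.

Definition SE (N : V -> R) : Prop :=
  forall (D : set V) (f : V -> K),
    subspace D -> in_dual N D f -> opnorm N D f = 1 ->
    exists g : V -> K,
      [/\ in_dual N setT g, (forall x, D x -> g x = f x) & opnorm N setT g = 1].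

End Defs.

Definition sumnorm (R : realType) (K : fieldType) (abs : K -> R)
  (F : lmodType K) (NF : F -> R) (t : R) (p : (K^o * F)%type) : R :=
  Num.max (t * abs p.1) (NF p.2).

(* Restricting to the summand {0} (+) F transfers (SE) from E to F.
   Conversely, let F be finite-dimensional with (SE), K complete. Then every
   functional with |f| <= ||.|| on a subspace of F extends to F with the same
   bound: if its norm is 1 this is (SE); if its norm is A < 1, adjoin the
   vectors of a spanning family one at a time, letting the bound grow from A
   towards 1 (at a vector adherent to the subspace the value is forced and
   exists by completeness). Now let |f| <= ||.||_E on a subspace D of E. If
   some (a, u) in D has ||u|| < t|a|, extend f(0, .) to H on F and put
   G(b, v) = b g + H v with g = (f(a, u) - H u) / a, which satisfies |g| <= t;
   otherwise D is the graph of a linear map over its projection to F, and f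
   extends through that projection. *)

From HB Require Import structures.
From mathcomp Require Import all_boot all_order all_algebra.
From mathcomp Require Import all_classical all_reals.
From mathcomp Require Import lra ring.
Import Order.TTheory GRing.Theory Num.Theory.

Set Implicit Arguments.
Unset Strict Implicit.
Unset Printing Implicit Defensive.

Local Open Scope ring_scope.
Local Open Scope classical_set_scope.

Lemma eventually_invS_lt (R : realType) (r : R) : 0 < r ->
  exists M : nat, forall n, (M <= n)%N -> n.+1%:R^-1 < r.
Proof.
move=> r0; exists (Num.Def.archi_bound r^-1) => n hn.
rewrite invf_plt ?posrE ?ltr0Sn //.
apply: lt_le_trans (archi_boundP (ltW _)) _; first by rewrite invr_gt0.
by rewrite ler_nat; apply: leq_trans hn _.
Qed.

Section AbsoluteValue.
Variables (R : realType) (K : fieldType) (abs : K -> R).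
Hypothesis habs : nonarch_abs abs.

Lemma abs_ge0 x : 0 <= abs x. Proof. by case: habs. Qed.
Lemma abs0 : abs 0 = 0. Proof. by case: habs => _ h _ _ _; exact: (h 0).2. Qed.
Lemma abs_eq0 x : abs x = 0 -> x = 0. Proof. by case: habs => _ h _ _ _; exact: (h x).1. Qed.
Lemma absM x y : abs (x * y) = abs x * abs y. Proof. by case: habs. Qed.
Lemma absD_le_max x y : abs (x + y) <= Num.max (abs x) (abs y).
Proof. by case: habs. Qed.

Lemma abs_gt0 x : x != 0 -> 0 < abs x.
Proof. by move=> x0; rewrite lt_def abs_ge0 andbT; apply: contraNneq x0 => /abs_eq0 ->. Qed.

Lemma abs1 : abs 1 = 1.
Proof.
have a1_neq0 : abs 1 != 0 by rewrite gt_eqF // abs_gt0 // oner_eq0.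
by apply: (mulfI a1_neq0); rewrite -absM !mulr1.
Qed.

Lemma absN1 : abs (-1) = 1.
Proof.
have sq1 : abs (-1) * abs (-1) = 1 by rewrite -absM mulrNN mulr1 abs1.
have := abs_ge0 (-1); nra.
Qed.

Lemma absN x : abs (- x) = abs x.
Proof. by rewrite -mulN1r absM absN1 mul1r. Qed.

Lemma absB_le_max x y : abs (x - y) <= Num.max (abs x) (abs y).
Proof. by rewrite -(absN y) absD_le_max. Qed.

Lemma absV x : x != 0 -> abs x^-1 = (abs x)^-1.
Proof.
move=> x0; have ax0 : abs x != 0 by rewrite gt_eqF // abs_gt0.
by apply: (mulfI ax0); rewrite -absM !mulfV // abs1.
Qed.

End AbsoluteValue.

Section Subspaces.
Variables (K : fieldType) (V : lmodType K).
Implicit Types (S D : set V) (f : V -> K).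

Lemma subspace0 S : subspace S -> S 0. Proof. by case. Qed.

Lemma subspaceD S x y : subspace S -> S x -> S y -> S (x + y).
Proof. by case=> _ h Sx Sy; rewrite -[x]scale1r; apply: h. Qed.

Lemma subspaceZ S a x : subspace S -> S x -> S (a *: x).
Proof. by case=> S0 h Sx; rewrite -[a *: x]addr0; apply: h. Qed.

Lemma subspaceN S x : subspace S -> S x -> S (- x).
Proof. by move=> sS Sx; rewrite -scaleN1r; apply: subspaceZ. Qed.

Lemma subspaceB S x y : subspace S -> S x -> S y -> S (x - y).
Proof. by move=> sS Sx Sy; apply: subspaceD => //; apply: subspaceN. Qed.

Lemma subspace_span S (s : seq V) (c : 'I_(size s) -> K) :
  subspace S -> (forall y, y \in s -> S y) -> S (\sum_(i < size s) c i *: s`_i).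
Proof.
move=> sS hs; apply: (big_ind S) => [|y z|i _]; first exact: subspace0.
  exact: subspaceD.
by apply: subspaceZ => //; apply/hs/mem_nth.
Qed.

Lemma linear_on0 D f : subspace D -> linear_on D f -> f 0 = 0.
Proof.
move=> sD lf; have := lf 1 0 0 (subspace0 sD) (subspace0 sD).
rewrite scaler0 addr0 mul1r => h.
by apply: (addrI (f 0)); rewrite -h addr0.
Qed.

Lemma linear_onD D f x y : subspace D -> linear_on D f -> D x -> D y ->
  f (x + y) = f x + f y.
Proof. by move=> sD lf Dx Dy; rewrite -{1}[x]scale1r lf // mul1r. Qed.

Lemma linear_onZ D f a x : subspace D -> linear_on D f -> D x -> f (a *: x) = a * f x.
Proof.
move=> sD lf Dx; rewrite -[a *: x]addr0 lf //; last exact: subspace0.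
by rewrite (linear_on0 sD lf) addr0.
Qed.

Lemma linear_onB D f x y : subspace D -> linear_on D f -> D x -> D y ->
  f (x - y) = f x - f y.
Proof.
move=> sD lf Dx Dy; rewrite -scaleN1r (linear_onD sD lf) ?(linear_onZ _ sD lf) //.
  by rewrite mulN1r.
by apply: subspaceZ.
Qed.

Definition add_line S (x : V) : set V := [set y | exists l, S (y - l *: x)].

Lemma add_line_lin_comb (a l m : K) (x y z : V) :
  (a *: y + z) - (a * l + m) *: x = a *: (y - l *: x) + (z - m *: x).
Proof. by rewrite scalerDl -scalerA scalerBr opprD addrACA. Qed.

Lemma subspace_add_line S x : subspace S -> subspace (add_line S x).
Proof.
move=> sS; split; first by exists 0; rewrite scale0r subr0; exact: subspace0.
move=> a y z [l Sy] [m Sz]; exists (a * l + m); rewrite add_line_lin_comb.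
by apply: subspaceD => //; apply: subspaceZ.
Qed.

Lemma sub_add_line S x : S `<=` add_line S x.
Proof. by move=> y Sy; exists 0; rewrite scale0r subr0. Qed.

Lemma add_line_vector S x : subspace S -> add_line S x x.
Proof. by move=> sS; exists 1; rewrite scale1r subrr; exact: subspace0. Qed.

Lemma add_line_coef_uniq S x y l m : subspace S -> ~ S x ->
  S (y - l *: x) -> S (y - m *: x) -> l = m.
Proof.
move=> sS nSx Sl Sm; have [//|lm] := eqVneq l m; case: nSx.
have -> : x = (l - m)^-1 *: ((y - m *: x) - (y - l *: x)).
  by rewrite opprB [_ + (_ - y)]addrC addrA subrK -scalerBl scalerA mulVf ?scale1r ?subr_eq0.
by apply: subspaceZ => //; apply: subspaceB.
Qed.

End Subspaces.

Section NonarchNorm.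
Variables (R : realType) (K : fieldType) (abs : K -> R) (V : lmodType K) (N : V -> R).
Hypotheses (habs : nonarch_abs abs) (hN : nanorm abs N).
Implicit Types (S D : set V) (f : V -> K).

Lemma nanorm_eq0 x : N x = 0 <-> x = 0. Proof. by case: hN. Qed.
Lemma nanormZ a x : N (a *: x) = abs a * N x. Proof. by case: hN. Qed.
Lemma nanormD_le_max x y : N (x + y) <= Num.max (N x) (N y). Proof. by case: hN. Qed.

Lemma nanorm0 : N 0 = 0. Proof. exact/nanorm_eq0. Qed.

Lemma nanormN x : N (- x) = N x.
Proof. by rewrite -scaleN1r nanormZ absN1 // mul1r. Qed.

Lemma nanorm_ge0 x : 0 <= N x.
Proof. by have := nanormD_le_max x (- x); rewrite subrr nanorm0 nanormN maxxx. Qed.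

Lemma nanorm_gt0 x : x != 0 -> 0 < N x.
Proof.
by move=> x0; rewrite lt_def nanorm_ge0 andbT; apply: contraNneq x0 => /nanorm_eq0 ->.
Qed.

Lemma nanormB_le_max x y : N (x - y) <= Num.max (N x) (N y).
Proof. by rewrite -(nanormN y) nanormD_le_max. Qed.

Definition bounded_by D f (B : R) := forall x, D x -> abs (f x) <= B * N x.

Definition bounded_extension S k S' k' (B : R) :=
  [/\ subspace S', S `<=` S', linear_on S' k', (forall s, S s -> k' s = k s)
    & bounded_by S' k' B].

Definition contractive_extension D f (g : V -> K) :=
  [/\ linear_on setT g, (forall x, D x -> g x = f x) & bounded_by setT g 1].

Definition has_contractive_extensions := forall D f,
  subspace D -> linear_on D f -> bounded_by D f 1 -> exists g, contractive_extension D f g.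

Lemma bounded_by_le D f (A B : R) : A <= B -> bounded_by D f A -> bounded_by D f B.
Proof.
move=> AB fA x Dx; apply: le_trans (fA x Dx) _.
by apply: ler_wpM2r => //; exact: nanorm_ge0.
Qed.

Let ratios D f := [set r : R | exists x, [/\ D x, x != 0 & r = abs (f x) / N x]].

Let ratios_ub D f C : bounded_by D f C -> ubound (ratios D f) C.
Proof. by move=> fC r [x [Dx x0 ->]]; rewrite ler_pdivrMr ?nanorm_gt0 //; exact: fC. Qed.

Lemma opnorm_ge0 D f : 0 <= opnorm abs N D f.
Proof.
rewrite /opnorm -/(ratios D f).
have [->|/set0P [r rDf]] := eqVneq (ratios D f) set0; first by rewrite sup0.
have [hs|hs] := pselect (has_sup (ratios D f)); last by rewrite sup_out.
apply: le_trans (sup_upper_bound hs rDf).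
by case: rDf => x [_ _ ->]; rewrite divr_ge0 ?abs_ge0 ?nanorm_ge0.
Qed.

Lemma opnorm_le D f (B : R) : 0 <= B -> bounded_by D f B -> opnorm abs N D f <= B.
Proof.
move=> B0 fB; rewrite /opnorm -/(ratios D f).
have [->|/set0P ne] := eqVneq (ratios D f) set0; first by rewrite sup0.
exact: ge_sup ne (ratios_ub fB).
Qed.

Lemma bounded_by_opnorm D f : subspace D -> linear_on D f -> bounded_on abs N D f ->
  bounded_by D f (opnorm abs N D f).
Proof.
move=> sD lf [C fC] x Dx.
have [->|x0] := eqVneq x 0; first by rewrite (linear_on0 sD lf) abs0 // nanorm0 mulr0.
rewrite -ler_pdivrMr ?nanorm_gt0 //; apply: ub_le_sup; first by exists C; exact: ratios_ub.
by exists x.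
Qed.

Lemma opnorm_extension_eq1 D D' f g : opnorm abs N D f = 1 -> D `<=` D' ->
  (forall x, D x -> g x = f x) -> bounded_by D' g 1 -> opnorm abs N D' g = 1.
Proof.
move=> f1 DD' gf g1; apply/le_anti; rewrite opnorm_le //=.
rewrite -[X in X <= _]f1 /opnorm -!/(ratios _ _).
have [->|/set0P ne] := eqVneq (ratios D f) set0.
  by rewrite sup0 -/(opnorm _ _ _ _) opnorm_ge0.
apply: ge_sup ne _ => r [x [Dx x0 ->]].
apply: ub_le_sup; first by exists 1; exact: ratios_ub.
by exists x; split => //; [exact: DD' | rewrite gf].
Qed.

Lemma SE_of_opnorm1_extensions :
  (forall D f, subspace D -> in_dual abs N D f -> opnorm abs N D f = 1 ->
     exists g, contractive_extension D f g) -> SE abs N.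
Proof.
move=> hext D f sD df f1; have [g [lg gf g1]] := hext D f sD df f1.
exists g; split => //; first by split => //; exists 1.
exact: opnorm_extension_eq1 f1 (@subsetT _ D) gf g1.
Qed.

Lemma SE_of_contractive_extensions : has_contractive_extensions -> SE abs N.
Proof.
move=> hce; apply: SE_of_opnorm1_extensions => D f sD [lf bf] f1.
by apply: hce => //; rewrite -f1; exact: bounded_by_opnorm.
Qed.

End NonarchNorm.

Section ExtensionByVector.
Variables (R : realType) (K : fieldType) (abs : K -> R) (V : lmodType K) (N : V -> R).
Hypotheses (habs : nonarch_abs abs) (hcomp : abs_complete abs) (hN : nanorm abs N).
Variables (S : set V) (k : V -> K) (A B : R) (x : V).
Hypotheses (A0 : 0 <= A) (AB : A < B) (sS : subspace S) (lk : linear_on S k)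
  (kA : bounded_by abs N S k A).

Let B0 : 0 < B. Proof. exact: le_lt_trans AB. Qed.

Let dists := [set r | exists2 s, S s & r = N (x - s)].

Let has_inf_dists : has_inf dists.
Proof.
split; first by exists (N (x - 0)); exists 0 => //; exact: subspace0.
by exists 0 => r [s _ ->]; exact: nanorm_ge0 habs hN (x - s).
Qed.

Let inf_dists_le s : S s -> inf dists <= N (x + s).
Proof.
move=> Ss; apply: (ge_inf has_inf_dists.2).
by exists (- s); [exact: subspaceN | rewrite opprK].
Qed.

Let kD_le s0 s : S s0 -> S s ->
  abs (k s0 + k s) <= A * Num.max (N (x + s)) (N (x - s0)).
Proof.
move=> Ss0 Ss; rewrite -(linear_onD sS lk) //.
apply: le_trans (kA (subspaceD sS Ss0 Ss)) _; apply: (ler_wpM2l A0).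
have -> : s0 + s = (x + s) - (x - s0) by rewrite opprB [RHS]addrC addrA subrK.
exact: (nanormB_le_max habs hN (x + s) (x - s0)).
Qed.

(* The distance from x to S need not be attained, hence the slack A < B. *)
Lemma extension_value_far : 0 < inf dists ->
  exists c, forall s, S s -> abs (c + k s) <= B * N (x + s).
Proof.
move=> d0.
have [s0 Ss0 s0_near] : exists2 s0, S s0 & A * N (x - s0) <= B * inf dists.
  have [->|A_neq0] := eqVneq A 0.
    by exists 0; [exact: subspace0 | rewrite mul0r mulr_ge0 // ltW].
  have Ap : 0 < A by rewrite lt_def A_neq0 A0.
  have eps0 : 0 < B * inf dists / A - inf dists.
    by rewrite subr_gt0 ltr_pdivlMr // [B * _]mulrC ltr_pM2l.
  have [_ [s Ss ->] near_s] := inf_adherent eps0 has_inf_dists.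
  exists s => //; move: near_s; rewrite addrCA subrr addr0 ltr_pdivlMr // mulrC.
  exact: ltW.
exists (k s0) => s Ss; apply: le_trans (kD_le Ss0 Ss) _.
rewrite maxr_pMr // ge_max; apply/andP; split.
  by apply: ler_wpM2r; [exact: (nanorm_ge0 habs hN (x + s)) | exact: ltW].
by apply: le_trans s0_near _; apply: ler_wpM2l; [exact: ltW | exact: inf_dists_le].
Qed.

(* x lies in the closure of S, and k extends to it by continuity. *)
Lemma extension_value_adherent : ~ S x -> inf dists = 0 ->
  exists c, forall s, S s -> abs (c + k s) <= B * N (x + s).
Proof.
move=> nSx d0.
have /choice [sq sqP] : forall n : nat, exists s, S s /\ N (x - s) < n.+1%:R^-1.
  move=> n; have [|_ [s Ss ->]] := inf_adherent (_ : 0 < n.+1%:R^-1) has_inf_dists.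
    by rewrite invr_gt0 ltr0Sn.
  by rewrite d0 add0r => near_s; exists s.
have k_cauchy : abs_cauchy abs (k \o sq).
  move=> e e0; have eA : 0 < e / (A + 1) by rewrite divr_gt0 // (le_lt_trans A0) ?ltrDl.
  have [M hM] := eventually_invS_lt eA.
  exists M => m n hm hn /=.
  rewrite -(linear_onB sS lk (sqP m).1 (sqP n).1).
  apply: le_lt_trans (kA (subspaceB sS (sqP m).1 (sqP n).1)) _.
  have -> : sq m - sq n = (x - sq n) - (x - sq m) by rewrite opprB [RHS]addrC addrA subrK.
  apply: le_lt_trans (ler_wpM2l A0 (nanormB_le_max habs hN _ _)) _.
  have near_mn : Num.max (N (x - sq n)) (N (x - sq m)) < e / (A + 1).
    by rewrite gt_max (lt_trans (sqP n).2 (hM n hn)) (lt_trans (sqP m).2 (hM m hm)).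
  apply: le_lt_trans (ler_wpM2l A0 (ltW near_mn)) _.
  rewrite mulrA ltr_pdivrMr; last by rewrite (le_lt_trans A0) ?ltrDl.
  by rewrite mulrDr mulr1 [A * e]mulrC ltrDl.
have [c kc] := hcomp k_cauchy.
exists c => s Ss.
have xs_gt0 : 0 < N (x + s).
  apply: (nanorm_gt0 habs hN); apply/eqP => xs0; apply: nSx.
  have -> : x = - s by apply/eqP; rewrite -addr_eq0 xs0.
  exact: subspaceN.
have [M1 hM1] := kc _ (mulr_gt0 B0 xs_gt0).
have [M2 hM2] := eventually_invS_lt xs_gt0.
pose n := maxn M1 M2.
have near_c : abs (c - k (sq n)) < B * N (x + s).
  by rewrite -absN // opprB; exact: hM1 n (leq_maxl _ _).
have near_x : N (x - sq n) <= N (x + s).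
  exact: ltW (lt_trans (sqP n).2 (hM2 n (leq_maxr _ _))).
have -> : c + k s = (c - k (sq n)) + (k (sq n) + k s) by rewrite addrA subrK.
apply: le_trans (absD_le_max habs _ _) _; rewrite ge_max (ltW near_c) /=.
apply: le_trans (kD_le (sqP n).1 Ss) _; rewrite (max_idPl near_x).
by apply: ler_wpM2r; [exact: (nanorm_ge0 habs hN (x + s)) | exact: ltW].
Qed.

Lemma extension_value : ~ S x ->
  exists c, forall s, S s -> abs (c + k s) <= B * N (x + s).
Proof.
move=> nSx; have [d_gt0|d_le0] := ltP 0 (inf dists); first exact: extension_value_far.
apply: extension_value_adherent => //; apply/le_anti; rewrite d_le0.
by apply: lb_le_inf has_inf_dists.1 _ => r [s _ ->]; exact: nanorm_ge0 habs hN (x - s).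
Qed.

Lemma extend_by_vector :
  exists S' k', bounded_extension abs N S k S' k' B /\ S' x.
Proof.
have kB := bounded_by_le habs hN (ltW AB) kA.
have [Sx|nSx] := pselect (S x); first by exists S, k; split => //; split => // s.
have [c kc] := extension_value nSx.
pose lam y := xget 0 [set l | S (y - l *: x)].
have lamE y l : S (y - l *: x) -> lam y = l.
  by move=> Sl; apply: xget_unique => // m Sm; exact: add_line_coef_uniq Sm Sl.
pose k' y := lam y * c + k (y - lam y *: x).
exists (add_line S x), k'; split; last exact: add_line_vector.
split.
- exact: subspace_add_line.
- exact: sub_add_line.
- move=> a y z [l Sl] [m Sm].
  have Slm : S ((a *: y + z) - (a * l + m) *: x).
    by rewrite add_line_lin_comb; apply: subspaceD => //; exact: subspaceZ.
  rewrite /k' (lamE _ _ Sl) (lamE _ _ Sm) (lamE _ _ Slm) add_line_lin_comb.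
  rewrite (linear_onD sS lk) ?(linear_onZ _ sS lk) //; last exact: subspaceZ.
  ring.
- move=> s Ss; have S0 : S (s - 0 *: x) by rewrite scale0r subr0.
  by rewrite /k' (lamE _ _ S0) mul0r add0r scale0r subr0.
- move=> y [l Sl]; rewrite /k' (lamE _ _ Sl).
  have [l0|l_neq0] := eqVneq l 0.
    by rewrite l0 mul0r add0r scale0r subr0; rewrite l0 scale0r subr0 in Sl; exact: kB.
  set s := y - l *: x in Sl *.
  have -> : y = l *: (x + l^-1 *: s) by rewrite scalerDr scalerA mulfV // scale1r addrC subrK.
  have -> : l * c + k s = l * (c + k (l^-1 *: s)).
    by rewrite (linear_onZ _ sS lk Sl) mulrDr mulrA mulfV // mul1r.
  rewrite (nanormZ hN) (absM habs) [B * _]mulrCA.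
  exact: ler_wpM2l (abs_ge0 habs l) _ _ (kc _ (subspaceZ _ sS Sl)).
Qed.

End ExtensionByVector.

Section FiniteDimensionalExtension.
Variables (R : realType) (K : fieldType) (abs : K -> R) (V : lmodType K) (N : V -> R).
Hypotheses (habs : nonarch_abs abs) (hcomp : abs_complete abs) (hN : nanorm abs N).

Lemma extend_to_seq (L : seq V) S k (A B : R) : 0 <= A -> A < B -> subspace S ->
  linear_on S k -> bounded_by abs N S k A ->
  exists S' k', bounded_extension abs N S k S' k' B /\ forall y, y \in L -> S' y.
Proof.
elim: L S k A => [|x L IH] S k A A0 AB sS lk kA.
  have kB := bounded_by_le habs hN (ltW AB) kA.
  by exists S, k; split => //; split => // s.
pose C := (A + B) / 2.
have [AC C0 CB] : [/\ A < C, 0 <= C & C < B] by rewrite /C; split; lra.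
have [S1 [k1 [[sS1 SS1 lk1 ek1 kC] S1x]]] :=
  extend_by_vector habs hcomp hN x A0 AC sS lk kA.
have [S2 [k2 [[sS2 S12 lk2 ek2 kB] LS2]]] := IH S1 k1 C C0 CB sS1 lk1 kC.
exists S2, k2; split; first split => //.
- by move=> s /SS1 /S12.
- by move=> s Ss; rewrite ek2 ?ek1 //; exact: SS1.
- by move=> y; rewrite in_cons => /predU1P [->|/LS2 //]; exact: S12.
Qed.

Lemma contractive_extensions_of_SE :
  SE abs N -> findim V -> has_contractive_extensions abs N.
Proof.
move=> hSE [L L_spans] S k sS lk k1.
have bk : bounded_on abs N S k by exists 1.
have [o1|o_neq1] := eqVneq (opnorm abs N S k) 1.
  have [g [[lg bg] eg og]] := hSE S k sS (conj lk bk) o1.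
  have sT : subspace (@setT V) by [].
  by exists g; split => //; move: (bounded_by_opnorm habs hN sT lg bg); rewrite og.
have o_lt1 : opnorm abs N S k < 1 by rewrite lt_neqAle o_neq1 opnorm_le.
have [S' [k' [[sS' _ lk' ek' kB] LS']]] :=
  extend_to_seq L (opnorm_ge0 habs hN S k) o_lt1 sS lk (bounded_by_opnorm habs hN sS lk bk).
have S'T : S' = setT.
  by apply/seteqP; split => // y _; have [c ->] := L_spans y; exact: subspace_span sS' LS'.
by exists k'; rewrite /contractive_extension -S'T.
Qed.

End FiniteDimensionalExtension.

Section SumNorm.
Variables (R : realType) (K : fieldType) (abs : K -> R) (F : lmodType K) (NF : F -> R) (t : R).
Hypotheses (habs : nonarch_abs abs) (hNF : nanorm abs NF) (ht : 0 < t).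

Local Notation E := (K^o * F)%type.
Local Notation NE := (sumnorm abs NF t).

Lemma pair_lin_comb (a : K) (p q : E) :
  a *: p + q = (a * p.1 + q.1 : K^o, a *: p.2 + q.2).
Proof. by []. Qed.

Lemma lift_lin_comb (a : K) (u v : F) : (0, a *: u + v) = a *: (0, u) + (0, v) :> E.
Proof. by rewrite pair_lin_comb /= mulr0 addr0. Qed.

Lemma sumnorm_lift u : NE (0, u) = NF u.
Proof. by rewrite /sumnorm /= abs0 // mulr0; apply/max_idPr/(nanorm_ge0 habs hNF). Qed.

Lemma sumnorm_nanorm : nanorm abs NE.
Proof.
split.
- move=> [a u]; rewrite /sumnorm /=; split => [NE0|[-> ->]]; last first.
    by rewrite abs0 // (nanorm0 hNF) mulr0 maxxx.
  have /andP[ta_le0 u_le0] : (t * abs a <= 0) && (NF u <= 0) by rewrite -ge_max NE0.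
  rewrite pmulr_rle0 // in ta_le0.
  congr pair; [apply: (abs_eq0 habs) | apply/(nanorm_eq0 hNF)]; apply/le_anti.
    by rewrite ta_le0 abs_ge0.
  by rewrite u_le0 (nanorm_ge0 habs hNF).
- move=> c [a u]; rewrite /sumnorm /= (nanormZ hNF) (absM habs) mulrCA.
  by rewrite -maxr_pMr ?abs_ge0.
- move=> [a u] [b v]; rewrite /sumnorm /= maxACA.
  apply: le_max2; last exact: nanormD_le_max hNF u v.
  rewrite -maxr_pMr; last exact: ltW.
  exact: ler_wpM2l (ltW ht) _ _ (absD_le_max habs a b).
Qed.

Let lift (D : set F) : set E := [set p | p.1 = 0 /\ D p.2].

Let subspace_lift D : subspace D -> subspace (lift D).
Proof.
move=> sD; split; first by split => //; exact: subspace0.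
move=> a p q [p1 Dp] [q1 Dq]; rewrite pair_lin_comb; split => /=.
  by rewrite p1 q1 mulr0 addr0.
exact: sD.2.
Qed.

Let opnorm_lift D f : opnorm abs NE (lift D) (f \o snd) = opnorm abs NF D f.
Proof.
rewrite /opnorm; congr sup; apply/seteqP; split => r [p [Dp p_neq0 ->]].
  case: p Dp p_neq0 => a u [/= -> Du] p_neq0; exists u; split => //.
    by apply: contraNneq p_neq0 => ->; apply/eqP.
  by rewrite sumnorm_lift.
exists (0, p); split => //; last by rewrite /= sumnorm_lift.
by apply: contraNneq p_neq0 => -[->].
Qed.

Lemma SE_sumnorm_restrict : SE abs NE -> SE abs NF.
Proof.
move=> hE; apply: (SE_of_opnorm1_extensions habs hNF) => D f sD [lf [C fC]] f1.
have lfE : linear_on (lift D) (f \o snd) by move=> a p q [_ Dp] [_ Dq]; exact: lf.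
have bfE : bounded_on abs NE (lift D) (f \o snd).
  by exists C => -[a u] [/= -> Du]; rewrite sumnorm_lift; exact: fC.
have [g [[lg bg] eg og]] :=
  hE _ _ (subspace_lift sD) (conj lfE bfE) (etrans (opnorm_lift D f) f1).
have sT : subspace (@setT E) by [].
have g1 : bounded_by abs NE setT g 1.
  by move: (bounded_by_opnorm habs sumnorm_nanorm sT lg bg); rewrite og.
exists (fun u => g (0, u)); split.
- by move=> a u v _ _; rewrite lift_lin_comb lg.
- by move=> u Du; exact: (eg (0, u) (conj erefl Du)).
- by move=> u _; rewrite -sumnorm_lift; exact: g1.
Qed.

Lemma sumnorm_extension_scalar_dominant D f a1 u1 :
  has_contractive_extensions abs NF -> subspace D -> linear_on D f ->
  bounded_by abs NE D f 1 -> D (a1, u1) -> NF u1 < t * abs a1 ->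
  exists g, contractive_extension abs NE D f g.
Proof.
move=> hF sD lf f1 Dau1 u1_lt.
pose W := [set u | D (0, u)].
have sW : subspace W.
  split; first exact: subspace0 sD.
  by move=> a u v Du Dv; rewrite /W /= lift_lin_comb; exact: sD.2.
have lh : linear_on W (fun u => f (0, u)).
  by move=> a u v Du Dv; rewrite /= lift_lin_comb lf.
have h1 : bounded_by abs NF W (fun u => f (0, u)) 1.
  by move=> u Wu; rewrite -sumnorm_lift; exact: f1.
have [H [lH eH H1]] := hF _ _ sW lh h1.
have a1_neq0 : a1 != 0.
  by apply: contraTneq u1_lt => ->; rewrite abs0 // mulr0 -leNgt (nanorm_ge0 habs hNF).
pose g := (f (a1, u1) - H u1) / a1.
have g_le : abs g <= t.
  rewrite (absM habs) (absV habs) // ler_pdivrMr ?(abs_gt0 habs) //.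
  apply: le_trans (absB_le_max habs _ _) _; rewrite ge_max; apply/andP; split.
    by move: (f1 _ Dau1); rewrite mul1r /sumnorm /= (max_idPl (ltW u1_lt)).
  by apply: le_trans (ltW u1_lt); rewrite -[NF u1]mul1r; exact: H1.
exists (fun p : E => p.1 * g + H p.2); split.
- move=> a p q _ _; rewrite pair_lin_comb /= (lH a _ _ I I).
  ring.
- move=> [b v] Dbv /=.
  pose mu := b / a1.
  have Dw : W (v - mu *: u1).
    rewrite /W /= (_ : (0, _) = (- mu) *: (a1, u1) + (b, v)); first exact: sD.2.
    by rewrite pair_lin_comb /= /mu mulNr divfK // addNr scaleNr addrC.
  have -> : (b, v) = mu *: (a1, u1) + (0, v - mu *: u1) :> E.
    by rewrite pair_lin_comb /= /mu divfK // addr0 addrC subrK.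
  have -> : H v = mu * H u1 + H (v - mu *: u1) by rewrite -(lH _ _ _ I I) addrC subrK.
  by rewrite lf // -(eH _ Dw) /g /mu; field.
- move=> [b v] _ /=; apply: le_trans (absD_le_max habs _ _) _.
  rewrite /sumnorm /= mul1r; apply: le_max2; last by rewrite -[NF v]mul1r; exact: H1.
  by rewrite (absM habs) mulrC; apply: ler_wpM2r (abs_ge0 habs b) _ _ g_le.
Qed.

Lemma sumnorm_extension_graph D f :
  has_contractive_extensions abs NF -> subspace D -> linear_on D f ->
  bounded_by abs NE D f 1 -> (forall p, D p -> t * abs p.1 <= NF p.2) ->
  exists g, contractive_extension abs NE D f g.
Proof.
move=> hF sD lf f1 D_flat.
have fst_uniq a b u : D (a, u) -> D (b, u) -> a = b.
  move=> Da Db; have := D_flat _ (subspaceB sD Da Db).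
  rewrite /= subrr (nanorm0 hNF) pmulr_rle0 // => ab_le0.
  apply/eqP; rewrite -subr_eq0; apply/eqP/(abs_eq0 habs)/le_anti.
  by rewrite ab_le0 abs_ge0.
pose S := [set u | exists a, D (a, u)].
pose fst_of u := xget 0 [set a | D (a, u)].
have fst_ofE a u : D (a, u) -> fst_of u = a.
  by move=> Dau; apply: xget_unique => // b Dbu; exact: fst_uniq Dbu Dau.
pose k u := f (fst_of u, u).
have sS : subspace S.
  split; first by exists 0; exact: subspace0 sD.
  by move=> c u v [a Da] [b Db]; exists (c * a + b); move: (sD.2 c _ _ Da Db).
have lk : linear_on S k.
  move=> c u v [a Da] [b Db]; have := sD.2 c _ _ Da Db; rewrite pair_lin_comb => Dc.
  by rewrite /k (fst_ofE _ _ Dc) (fst_ofE _ _ Da) (fst_ofE _ _ Db) -(lf c _ _ Da Db).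
have k1 : bounded_by abs NF S k 1.
  move=> u [a Da]; rewrite /k (fst_ofE _ _ Da); apply: le_trans (f1 _ Da) _.
  by rewrite /sumnorm /= (max_idPr (D_flat _ Da)).
have [H [lH eH H1]] := hF _ _ sS lk k1.
exists (fun p : E => H p.2); split.
- by move=> c p q _ _; exact: lH.
- by move=> [a u] Dau /=; rewrite eH /k ?(fst_ofE _ _ Dau) //; exists a.
- move=> [a u] _ /=; apply: le_trans (H1 u I) _.
  by rewrite !mul1r /sumnorm /= le_max lexx orbT.
Qed.

Lemma sumnorm_contractive_extensions :
  has_contractive_extensions abs NF -> has_contractive_extensions abs NE.
Proof.
move=> hF D f sD lf f1.
have [[[a u] [Dau u_lt]] | no_dominant] :=
  pselect (exists p, D p /\ NF p.2 < t * abs p.1).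
  exact: sumnorm_extension_scalar_dominant Dau u_lt.
apply: sumnorm_extension_graph => // p Dp; rewrite leNgt; apply/negP => p_lt.
by apply: no_dominant; exists p.
Qed.

End SumNorm.

Local Close Scope classical_set_scope.

Theorem mainTheorem13 (R : realType) (K : fieldType) (abs : K -> R)
  (habs : nonarch_abs abs) (hcomp : abs_complete abs)
  (hnsc : ~ spherically_complete abs)
  (F : lmodType K) (NF : F -> R) (hNF : nanorm abs NF) (hfd : findim F)
  (t : R) (ht : 0 < t) :
  SE abs (sumnorm abs NF t) <-> SE abs NF.
Proof.
split; first exact: SE_sumnorm_restrict.
move=> hF; apply: (SE_of_contractive_extensions habs (sumnorm_nanorm habs hNF ht)).
apply: sumnorm_contractive_extensions => //.
exact: contractive_extensions_of_SE hcomp hNF hF hfd.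
Qed.
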